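(* For every constant positive integer $m$ there exist constants $C,c>0$ such that the following holds. Let $A$ be a finite set with $|A|=n$, let $S\subseteq A$, and let $s_1,\dots,s_m$ be positive integers with $s_1+\dots+s_m\le n$. Let $(A_1,\dots,A_m)$ be chosen uniformly at random among all tuples of pairwise disjoint subsets of $A$ with $|A_i|=s_i$ for all $i$. Then \[\Pr\left[\ \left||A_i\cap S|-|A_i|\frac{|S|}{|A|}\right|\le C \text{ for all } i\in[m]\right]\ \ge\ n^{-c}.\] *)

From mathcomp Require Import all_boot.
From Stdlib Require Import Reals.

Set Implicit Arguments.
Unset Strict Implicit.
Unset Printing Implicit Defensive.

Definition Rleb (x y : R) : bool := if Rle_dec x y then true else false.

Definition valid_tuple (T : finType) (A : {set T}) (m : nat) (s : 'I_m -> nat)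
  (f : {ffun 'I_m -> {set T}}) : bool :=
  [forall i, (f i \subset A) && (#|f i| == s i)] &&
  [forall i, forall j, (i != j) ==> [disjoint f i & f j]].

Definition tuples (T : finType) (A : {set T}) (m : nat) (s : 'I_m -> nat)
  : {set {ffun 'I_m -> {set T}}} := [set f | valid_tuple A s f].

Definition good_tuples (T : finType) (A S : {set T}) (m : nat) (s : 'I_m -> nat)
  (C : R) : {set {ffun 'I_m -> {set T}}} :=
  [set f in tuples A s |
    [forall i, Rleb (Rabs (INR #|f i :&: S| - INR #|f i| * INR #|S| / INR #|A|)) C]].

Definition prob_good (T : finType) (A S : {set T}) (m : nat) (s : 'I_m -> nat)
  (C : R) : R :=
  INR #|good_tuples A S s C| / INR #|tuples A s|.

(* Group the valid tuples by their profile: for each of the m + 1 blocks (the parts A_i and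
   the rest of A) the number k of its elements in S and the number l of the others. There are
   at most (n + 1)^(2(m + 1)) <= n^(4(m + 1)) profiles (for n >= 2; n = 1 is trivial), so the
   most frequent profile class contains a fraction at least n^(-4(m + 1)) of all tuples. Exchanging an element of S in block j with an element outside
   S in block i maps this class into the class of the shifted profile, injectively on triples
   (tuple, x, y); maximality thus forces k_j l_i <= (k_i + 1)(l_j + 1) for all j <> i, and
   summing these inequalities over j pins k_i to |A_i| |S| / n up to m + 2. *)

From mathcomp Require Import all_boot.
From Stdlib Require Import Reals.
(* Re-imported so that [^] on [nat] denotes [expn] again rather than Stdlib's [Nat.pow]. *)
From mathcomp Require Import ssrnat perm zify.
From Stdlib Require Import Lra.

Set Implicit Arguments.
Unset Strict Implicit.
Unset Printing Implicit Defensive.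

Lemma cardsI_sum (T : finType) (P Q : {set T}) :
  #|P :&: Q| = \sum_(z in P) (z \in Q).
Proof.
rewrite -sum1_card (eq_bigl (fun z => (z \in P) && (z \in Q))) => [|z]; last first.
  by rewrite inE.
by rewrite big_mkcondr /=; apply: eq_bigr => z _; case: (z \in Q).
Qed.

Lemma sum_eq_nat (T : finType) (P : {pred T}) (x : T) :
  \sum_(z in P) (z == x) = (x \in P : nat).
Proof.
case xP: (x \in P).
  by rewrite (bigD1 x) //= eqxx big1 // => z /andP [_ /negbTE ->].
by rewrite big1 // => z zP; case: eqP => // zx; rewrite -zx zP in xP.
Qed.

Lemma card_fibred_setX (F T : finType) (C : {set F}) (X Y : F -> {set T}) a b :
  (forall f, f \in C -> #|X f| = a /\ #|Y f| = b) ->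
  #|[set t : F * (T * T) | (t.1 \in C) && (t.2 \in setX (X t.1) (Y t.1))]|
    = #|C| * (a * b).
Proof.
move=> cardXY; rewrite -sum1_card.
rewrite (eq_bigl (fun t => (t.1 \in C) && (t.2 \in setX (X t.1) (Y t.1)))) => [|t]; last first.
  by rewrite inE.
rewrite big_mkcond.
rewrite -(pair_bigA _ (fun f p => if (f \in C) && (p \in setX (X f) (Y f)) then 1 else 0)) /=.
rewrite -sum1_card big_distrl [RHS]big_mkcond /=; apply: eq_bigr => f _.
case fC: (f \in C); last by rewrite big1.
have [<- <-] := cardXY f fC; rewrite mul1n -cardsX -sum1_card [RHS]big_mkcond.
by apply: eq_bigr.
Qed.

Lemma largest_fibre (aT rT : finType) (D : {set aT}) (g : aT -> rT) (r0 : rT) :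
  exists v, #|D| <= #|rT| * #|[set x in D | g x == v]| /\
            forall w, #|[set x in D | g x == w]| <= #|[set x in D | g x == v]|.
Proof.
have [v _ max_v] := @arg_maxnP _ r0 xpredT (fun w => #|[set x in D | g x == w]|) isT.
exists v; split => [|w]; last exact: max_v.
rewrite -sum1_card (partition_big g xpredT) //= -sum_nat_const; apply: leq_sum => w _.
rewrite sum1dep_card; apply: leq_trans (max_v w isT); apply/subset_leq_card/subsetP => x.
by rewrite !inE.
Qed.

Lemma mem_tperm (T : finType) (x y z : T) (B : {set T}) :
  x \in B -> y \in B -> (tperm x y z \in B) = (z \in B).
Proof. by move=> xB yB; case: tpermP => [->|->|]; rewrite ?xB ?yB. Qed.

Lemma cardsI_preim_tperm (T : finType) (x y : T) (P Q : {set T}) :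
  x \in Q -> y \notin Q ->
  #|tperm x y @^-1: P :&: Q| + (x \in P) = #|P :&: Q| + (y \in P).
Proof.
move=> xQ yQ; have xy : x != y by apply: contraNneq yQ => <-.
rewrite -!sum_eq_nat !cardsI_sum (reindex_inj (inv_inj (tpermK x y))) /=.
rewrite (eq_bigl (mem P)) => [|z]; last by rewrite inE tpermK.
rewrite -!big_split /=; apply: eq_bigr => z _.
case: tpermP => [->|->|/eqP zx /eqP zy].
- by rewrite (negbTE yQ) xQ eqxx (negbTE xy).
- by rewrite (negbTE yQ) xQ eqxx eq_sym (negbTE xy).
- by rewrite (negbTE zx) (negbTE zy).
Qed.

Section Blocks.

Variables (T : finType) (A : {set T}) (m : nat) (s : 'I_m -> nat).
Implicit Types (f : {ffun 'I_m -> {set T}}) (o : option 'I_m).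

Definition block f o : {set T} :=
  if o is Some k then f k else A :\: \bigcup_k f k.

Lemma tuplesP f :
  reflect [/\ forall i, f i \subset A, forall i, #|f i| = s i &
              forall i j, i != j -> [disjoint f i & f j]]
          (f \in tuples A s).
Proof.
rewrite inE; apply: (iffP andP) => [[/forallP h1 /forallP h2]|[h1 h2 h3]].
  split=> [i|i|i j ij]; first by case/andP: (h1 i).
    by case/andP: (h1 i) => _ /eqP.
  by move/forallP/(_ j): (h2 i); rewrite ij.
split; apply/forallP => i; first by rewrite h1 h2 eqxx.
by apply/forallP => j; apply/implyP; apply: h3.
Qed.

Lemma block_sub f o : f \in tuples A s -> block f o \subset A.
Proof. by case/tuplesP => sfA _ _; case: o => [k|]; [apply: sfA | apply: subsetDl]. Qed.

Lemma block_disjoint f o1 o2 :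
  f \in tuples A s -> o1 != o2 -> [disjoint block f o1 & block f o2].
Proof.
case/tuplesP => _ _ dis.
have rest k : [disjoint block f (Some k) & block f None].
  rewrite -setI_eq0 setIDA; apply/eqP/setP => z; rewrite !inE.
  case: (boolP (z \in f k)) => [zk|]; last by rewrite andbF.
  by have -> : z \in \bigcup_k f k by apply/bigcupP; exists k.
case: o1 o2 => [k1|] [k2|] // ne.
- by apply: dis; apply: contra ne => /eqP ->.
by rewrite disjoint_sym.
Qed.

Lemma block_cover f : f \in tuples A s -> \bigcup_o block f o = A.
Proof.
move=> ft; apply/setP => z; apply/bigcupP/idP => [[o _]|zA].
  exact/subsetP/block_sub.
case: (boolP (z \in \bigcup_k f k)) => [/bigcupP [k _ zk]|zn].
  by exists (Some k).
by exists None => //=; rewrite inE zn zA.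
Qed.

Lemma sum_cardsI_block f (B : {set T}) :
  f \in tuples A s -> \sum_o #|block f o :&: B| = #|A :&: B|.
Proof.
move=> ft; rewrite cardsI_sum -(block_cover ft) partition_disjoint_bigcup.
  by apply: eq_bigr => o _; rewrite cardsI_sum.
by move=> o1 o2; apply: block_disjoint.
Qed.

Definition swap_tuple (x y : T) f : {ffun 'I_m -> {set T}} :=
  [ffun k => tperm x y @^-1: f k].

Lemma swap_tupleK x y : involutive (swap_tuple x y).
Proof. by move=> f; apply/ffunP => k; apply/setP => z; rewrite !ffunE !inE tpermK. Qed.

Lemma block_swap_tuple x y f o :
  x \in A -> y \in A -> block (swap_tuple x y f) o = tperm x y @^-1: block f o.
Proof.
move=> xA yA; case: o => [k|] /=; first by rewrite ffunE.
apply/setP => z; rewrite !inE (mem_tperm z xA yA); congr (~~ _ && _).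
by apply/bigcupP/bigcupP => -[k _ zk]; exists k; rewrite // ffunE inE in zk *.
Qed.

Lemma swap_tuple_tuples x y f :
  f \in tuples A s -> x \in A -> y \in A -> swap_tuple x y f \in tuples A s.
Proof.
move=> /tuplesP [sfA cardf dis] xA yA; apply/tuplesP; split=> [i|i|i j ij].
- by apply/subsetP => z; rewrite ffunE inE => /(subsetP (sfA i)); rewrite mem_tperm.
- by rewrite ffunE card_preimset ?cardf //; apply: perm_inj.
- by rewrite !ffunE -setI_eq0 -preimsetI (disjoint_setI0 (dis i j ij)) preimset0.
Qed.

End Blocks.

Lemma card_range n a b : a + b <= n -> #|[pred k : 'I_n | a <= k < a + b]| = b.
Proof.
move=> le_n; transitivity (\sum_(a <= k < a + b) 1); last first.
  by rewrite sum_nat_const_nat addKn muln1.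
rewrite (big_nat_widenl _ _ _ _ _ (leq0n a)) (big_nat_widen _ _ _ _ _ le_n) big_mkord.
by rewrite -sum1_card; apply: eq_bigl => k; rewrite inE.
Qed.

Section PartialSums.

Variables (m : nat) (s : 'I_m -> nat).

Lemma partial_sum_add_le (i j : 'I_m) : i < j ->
  \sum_(k < m | k < i) s k + s i <= \sum_(k < m | k < j) s k.
Proof.
move=> ij; rewrite [leqRHS](bigD1 i) //= addnC leq_add2l.
rewrite big_mkcond [leqRHS]big_mkcond; apply: leq_sum => k _.
by case: ifP => // ki; rewrite (ltn_trans ki ij) /= neq_ltn ki.
Qed.

Lemma partial_sum_add_le_sum (i : 'I_m) :
  \sum_(k < m | k < i) s k + s i <= \sum_(k < m) s k.
Proof.
rewrite [leqRHS](bigD1 i) //= addnC leq_add2l.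
rewrite big_mkcond [leqRHS]big_mkcond; apply: leq_sum => k _.
by case: ifP => // ki; rewrite neq_ltn ki.
Qed.

End PartialSums.

(* Enumerate [A]; the part [i] consists of the [s i] elements after the first
   [s 0 + ... + s (i - 1)]. *)
Lemma tuples_neq0 (T : finType) (A : {set T}) m (s : 'I_m -> nat) :
  \sum_(i < m) s i <= #|A| -> tuples A s != set0.
Proof.
move=> sum_le; pose off (i : 'I_m) := \sum_(k < m | k < i) s k.
pose f := [ffun i => [set enum_val k | k in [pred k : 'I_#|A| | off i <= k < off i + s i]]].
apply/set0Pn; exists f; apply/tuplesP; split => [i|i|i j ij]; rewrite !ffunE.
- by apply/subsetP => _ /imsetP [k _ ->]; apply: enum_valP.
- rewrite card_imset ?card_range //; last exact: enum_val_inj.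
  exact: leq_trans (partial_sum_add_le_sum s i) sum_le.
rewrite -setI_eq0; apply/eqP/setP => z; rewrite !inE; apply/negbTE/negP.
case/andP => /imsetP [k + ->] /imsetP [k' + /enum_val_inj eq_k]; rewrite -eq_k !inE.
have := partial_sum_add_le s; case: (ltngtP i j) => [lt|lt|/val_inj eq_ij].
- by move=> /(_ _ _ lt); rewrite -/(off i) -/(off j); lia.
- by move=> /(_ _ _ lt); rewrite -/(off i) -/(off j); lia.
- by rewrite eq_ij eqxx in ij.
Qed.

Section ExchangeInequalities.

Variables (n M sig t k : nat).
Hypotheses (nM_gt0 : 0 < n + M) (sig_le : sig <= n) (t_le : t <= n).

Lemma exchange_upper : k * (n + M) <= (sig + M) * (t + 1) -> n * k <= t * sig + n * M.+1.
Proof.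
move=> H.
have a1 : n * sig <= n * n by rewrite leq_mul2l sig_le orbT.
have a2 : n * M * t <= n * M * n by rewrite leq_mul2l t_le orbT.
have a3 : n * (k * (n + M)) <= n * ((sig + M) * (t + 1)) by rewrite leq_mul2l H orbT.
by rewrite -(leq_pmul2l nM_gt0); nia.
Qed.

Lemma exchange_lower : sig * (t + 1) <= (k + 1) * (n + M) -> t * sig <= n * k + n * M.+1.
Proof.
move=> H.
have b1 : M * t * sig <= M * n * n by rewrite -!mulnA leq_mul2l leq_mul ?orbT.
have b2 : n * (sig * (t + 1)) <= n * ((k + 1) * (n + M)) by rewrite leq_mul2l H orbT.
by rewrite -(leq_pmul2l nM_gt0); nia.
Qed.

End ExchangeInequalities.

(* [k j] and [l j] will be the numbers of elements of block [j] inside and outside [S]. *)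
Lemma exchange_balance (I : finType) (k l : I -> nat) (i : I) :
  (forall j i, j != i -> k j * l i <= (k i).+1 * (l j).+1) ->
  let n := \sum_j (k j + l j) in
  n * k i <= (k i + l i) * \sum_j k j + n * #|I|.+1 /\
  (k i + l i) * \sum_j k j <= n * k i + n * #|I|.+1.
Proof.
move=> exch n.
have step j i' : k j * (k i' + l i' + 1) <= (k i' + 1) * (k j + l j + 1).
  by case: (eqVneq j i') => [->|/exch]; nia.
have sum_t : \sum_j (k j + l j + 1) = n + #|I| by rewrite big_split /= sum1_card.
have sum_k : \sum_j (k j + 1) = \sum_j k j + #|I| by rewrite big_split /= sum1_card.
have pos : 0 < n + #|I| by rewrite addn_gt0 orbC; apply/orP; left; apply/card_gt0P; exists i.
have sig_le : \sum_j k j <= n by apply: leq_sum => j _; apply: leq_addr.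
have t_le : k i + l i <= n by rewrite /n (bigD1 i) //= leq_addr.
split; [apply: exchange_upper | apply: exchange_lower] => //.
- rewrite -sum_t -sum_k big_distrl big_distrr /=; apply: leq_sum => j _; exact: step.
- by rewrite -sum_t big_distrl big_distrr /=; apply: leq_sum => j _; exact: step.
Qed.

Lemma Rabs_sub_ratio_le (n k t sig C : nat) : 0 < n ->
  n * k <= t * sig + n * C -> t * sig <= n * k + n * C ->
  (Rabs (INR k - INR t * INR sig / INR n) <= INR C)%R.
Proof.
move=> n_gt0 /leP/le_INR up /leP/le_INR lo.
have n_pos : (0 < INR n)%R by apply/lt_0_INR/ltP.
rewrite !plus_INR !mult_INR in up lo.
set q := (INR t * INR sig / INR n)%R.
have nq : (INR n * q = INR t * INR sig)%R by rewrite /q; field; lra.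
by rewrite -nq in up lo; apply: Rabs_le; split; nra.
Qed.

Lemma mem_good_tuples (T : finType) (A S : {set T}) m (s : 'I_m -> nat) f (C : nat) :
  0 < #|A| -> f \in tuples A s ->
  (forall i, #|A| * #|f i :&: S| <= #|f i| * #|S| + #|A| * C /\
             #|f i| * #|S| <= #|A| * #|f i :&: S| + #|A| * C) ->
  f \in good_tuples A S s (INR C).
Proof.
move=> n_gt0 ft bal; rewrite inE ft; apply/forallP => i.
have [up lo] := bal i; rewrite /Rleb; case: Rle_dec => // [[]].
exact: Rabs_sub_ratio_le.
Qed.

Lemma tuples_sub_good_small (T : finType) (A S : {set T}) m (s : 'I_m -> nat) (C : nat) :
  S \subset A -> 0 < #|A| <= C -> tuples A s \subset good_tuples A S s (INR C).
Proof.
move=> SA /andP [n_gt0 n_le]; apply/subsetP => f ft; apply: mem_good_tuples => // i.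
have /tuplesP [sfA _ _] := ft.
have fiS : #|f i :&: S| <= #|A| by apply/subset_leq_card/(subset_trans (subsetIl _ _)).
have fi : #|f i| <= #|A| by apply/subset_leq_card.
have S_le : #|S| <= #|A| by apply/subset_leq_card.
split; apply: leq_trans (leq_addl _ _); first by rewrite leq_mul2l (leq_trans fiS n_le) orbT.
by apply: leq_trans (leq_mul fi S_le) _; rewrite leq_mul2l n_le orbT.
Qed.

Lemma INR_expn (a b : nat) : INR (a ^ b) = (INR a ^ b)%R.
Proof. by elim: b => [|b IH]; rewrite ?expn0 // expnS mult_INR IH. Qed.

Lemma inv_le_ratio (N P g : nat) : 0 < N -> 0 < P -> N <= P * g ->
  (/ INR P <= INR g / INR N)%R.
Proof.
move=> /ltP/lt_0_INR N_pos /ltP/lt_0_INR P_pos /leP/le_INR; rewrite mult_INR => le_Pg.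
apply: (Rmult_le_reg_l (INR P * INR N)); first exact: Rmult_lt_0_compat.
have -> : (INR P * INR N * / INR P = INR N)%R by field; lra.
by have -> : (INR P * INR N * (INR g / INR N) = INR P * INR g)%R by field; lra.
Qed.

Section Profiles.

Variables (T : finType) (A S : {set T}) (m : nat) (s : 'I_m -> nat).
Implicit Types (f : {ffun 'I_m -> {set T}}) (o : option 'I_m).

Local Notation n := #|A|.
Local Notation vec := {ffun option 'I_m -> 'I_n.+1 * 'I_n.+1}.

Definition profile f : vec :=
  [ffun o => (inord #|block A f o :&: S|, inord #|block A f o :\: S|)].

Definition profile_class (v : vec) := [set f in tuples A s | profile f == v].

Lemma profile_classP v f : f \in profile_class v ->
  f \in tuples A s /\
  forall o, #|block A f o :&: S| = (v o).1 /\ #|block A f o :\: S| = (v o).2.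
Proof.
rewrite inE => /andP [ft /eqP <-]; split => // o; rewrite ffunE /=.
have blk_le : #|block A f o| <= n := subset_leq_card (block_sub o ft).
by rewrite !inordK // ltnS (leq_trans _ blk_le) // -(cardsID S (block A f o)) ?leq_addr ?leq_addl.
Qed.

(* The profile after an element of [S] moves from block [j] to block [i]
   and an element outside [S] moves from [i] to [j]. *)
Definition shift_profile (v : vec) (j i : option 'I_m) : vec :=
  [ffun o => (inord ((v o).1 + (o == i) - (o == j)),
              inord ((v o).2 + (o == j) - (o == i)))].

Lemma swap_tuple_profile v f j i (x y : T) :
  f \in profile_class v -> j != i ->
  x \in block A f j :&: S -> y \in block A f i :\: S ->
  [/\ swap_tuple x y f \in profile_class (shift_profile v j i),
      x \in block A (swap_tuple x y f) i :&: S &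
      y \in block A (swap_tuple x y f) j :\: S].
Proof.
move=> /profile_classP [ft cnt] ji /setIP [xj xS] /setDP [yi yS].
have xA : x \in A by apply: (subsetP (block_sub j ft)).
have yA : y \in A by apply: (subsetP (block_sub i ft)).
have blk o := block_swap_tuple f o xA yA.
have mem_blk z k o : z \in block A f k -> (z \in block A f o) = (o == k).
  move=> zk; case: (eqVneq o k) => [->//|ne].
  by apply: (disjointFr (block_disjoint ft _) zk); rewrite eq_sym.
split; last 2 first.
- by rewrite blk !inE tpermL yi xS.
- by rewrite blk !inE tpermR xj yS.
rewrite inE swap_tuple_tuples //=; apply/eqP/ffunP => o; rewrite !ffunE blk.
have [<- <-] := cnt o.
have inS := cardsI_preim_tperm (block A f o) xS yS.
have outS : #|tperm x y @^-1: block A f o :\: S| + (y \in block A f o)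
          = #|block A f o :\: S| + (x \in block A f o).
  by rewrite !setDE tpermC cardsI_preim_tperm // inE ?xS ?yS.
rewrite (mem_blk x j) // (mem_blk y i) // in inS outS.
by rewrite -inS -outS !addnK.
Qed.

(* Double counting of the triples (tuple, x, y) with [x] in [block j :&: S] and [y] in
   [block i :\: S]: swapping [x] and [y] maps them injectively to the corresponding triples
   of the shifted class. *)
Lemma card_profile_class_shift v j i : j != i ->
  #|profile_class v| * ((v j).1 * (v i).2) <=
  #|profile_class (shift_profile v j i)| * (((v i).1).+1 * ((v j).2).+1).
Proof.
move=> ji.
have [->//|pos] := posnP (#|profile_class v| * ((v j).1 * (v i).2)).
have [f0 /profile_classP [ft0 cnt0]] : exists f0, f0 \in profile_class v.
  by apply/set0Pn; rewrite -card_gt0; move: pos; rewrite !muln_gt0 => /andP[].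
have room o : #|block A f0 o :&: S| + #|block A f0 o :\: S| <= n.
  by rewrite cardsID; apply: subset_leq_card (block_sub o ft0).
have lt_i : ((v i).1).+1 < n.+1.
  move: pos (room i) (cnt0 i); rewrite !muln_gt0 => /and3P [_ _ ?] ? [? ?]; lia.
have lt_j : ((v j).2).+1 < n.+1.
  move: pos (room j) (cnt0 j); rewrite !muln_gt0 => /and3P [_ ? _] ? [? ?]; lia.
rewrite -(@card_fibred_setX _ _ _ (fun f => block A f j :&: S) (fun f => block A f i :\: S));
  last by move=> f /profile_classP [_ cnt]; have [-> _] := cnt j; have [_ ->] := cnt i.
rewrite -(@card_fibred_setX _ _ _ (fun f => block A f i :&: S) (fun f => block A f j :\: S));
  last first.
  move=> f /profile_classP [_ cnt]; have [-> _] := cnt i; have [_ ->] := cnt j.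
  by rewrite !ffunE /= !eqxx eq_sym (negbTE ji) /= !addn1 !subn0 !inordK.
pose swp (t : {ffun 'I_m -> {set T}} * (T * T)) := (swap_tuple t.2.1 t.2.2 t.1, t.2).
have swp_inj : injective swp.
  move=> [f [x y]] [f1 [x1 y1]] [e ? ?]; subst x1 y1.
  by rewrite -(swap_tupleK x y f) e swap_tupleK.
rewrite -(card_imset _ swp_inj); apply/subset_leq_card/subsetP => t /imsetP [[f [x y]]].
rewrite inE => /andP [fv /setXP [xj yi]] ->.
by have [? ? ?] := swap_tuple_profile fv ji xj yi; rewrite inE; apply/andP; split=> //; apply/setXP.
Qed.

Lemma largest_profile_class_exchange v :
  profile_class v != set0 -> (forall w, #|profile_class w| <= #|profile_class v|) ->
  forall j i, j != i -> (v j).1 * (v i).2 <= ((v i).1).+1 * ((v j).2).+1.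
Proof.
move=> ne max_v j i ji; have pos : 0 < #|profile_class v| by rewrite card_gt0.
rewrite -(leq_pmul2l pos); apply: leq_trans (card_profile_class_shift v ji) _.
by rewrite leq_mul2r max_v orbT.
Qed.

Lemma largest_profile_class_balanced v f :
  S \subset A -> f \in profile_class v ->
  (forall w, #|profile_class w| <= #|profile_class v|) ->
  forall i, n * #|f i :&: S| <= #|f i| * #|S| + n * m.+2 /\
            #|f i| * #|S| <= n * #|f i :&: S| + n * m.+2.
Proof.
move=> SA fv max_v i; have [ft cnt] := profile_classP fv.
have ne : profile_class v != set0 by apply/set0Pn; exists f.
have := @exchange_balance _ (fun o => (v o).1 : nat) (fun o => (v o).2 : nat) (Some i)
  (largest_profile_class_exchange ne max_v).
have sum_t : \sum_o ((v o).1 + (v o).2 : nat) = n.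
  transitivity #|A :&: setT|; last by rewrite setIT.
  rewrite -(sum_cardsI_block setT ft); apply: eq_bigr => o _.
  by have [<- <-] := cnt o; rewrite setIT cardsID.
have sum_k : \sum_o ((v o).1 : nat) = #|S|.
  rewrite -(setIidPr SA) -(sum_cardsI_block S ft); apply: eq_bigr => o _.
  by have [<- _] := cnt o.
have [<- <-] := cnt (Some i).
by rewrite /= sum_t sum_k card_option card_ord cardsID.
Qed.

Lemma card_tuples_le_good :
  S \subset A -> 0 < n -> #|tuples A s| <= (n.+1 ^ 2) ^ m.+1 * #|good_tuples A S s (INR m.+2)|.
Proof.
move=> SA n_gt0.
have [v [card_le max_v]] := largest_fibre (tuples A s) profile [ffun=> (ord0, ord0)].
apply: leq_trans card_le _.
rewrite card_ffun card_prod card_option !card_ord leq_mul2l; apply/orP; right.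
apply/subset_leq_card/subsetP => f fv; have [ft _] := profile_classP fv.
exact: mem_good_tuples (largest_profile_class_balanced SA fv max_v).
Qed.

End Profiles.

Theorem mainTheorem7 :
  forall m : nat, (0 < m)%N ->
  exists C c : R, (0 < C)%R /\ (0 < c)%R /\
  forall (T : finType) (A S : {set T}) (s : 'I_m -> nat),
    S \subset A ->
    (forall i, 0 < s i)%N ->
    (\sum_(i < m) s i <= #|A|)%N ->
    (prob_good A S s C >= Rpower (INR #|A|) (- c))%R.
Proof.
move=> m m_gt0; exists (INR m.+2), (INR (4 * m.+1)).
split; [exact/lt_0_INR/ltP | split; [by apply/lt_0_INR/ltP; rewrite muln_gt0 |]].
move=> T A S s SA s_gt0 sum_le.
have n_gt0 : 0 < #|A|.
  by apply: leq_trans sum_le; rewrite (bigD1 (Ordinal m_gt0)) //= ltn_addr.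
have tuples_gt0 : 0 < #|tuples A s| by rewrite card_gt0 tuples_neq0.
have card_le : #|tuples A s| <= #|A| ^ (4 * m.+1) * #|good_tuples A S s (INR m.+2)|.
  have [n_le1 | n_gt1] := leqP #|A| 1.
    apply: leq_trans (leq_pmull _ _); last by rewrite expn_gt0 n_gt0.
    by apply/subset_leq_card/tuples_sub_good_small; rewrite // n_gt0 (leq_trans n_le1).
  apply: leq_trans (card_tuples_le_good s SA n_gt0) _.
  by rewrite leq_mul2r expnM leq_exp2r //; nia.
rewrite /prob_good Rpower_Ropp Rpower_pow; last exact/lt_0_INR/ltP.
by rewrite -INR_expn; apply/Rle_ge/inv_le_ratio; rewrite ?expn_gt0 ?n_gt0.
Qed.
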